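(* Let $X$ be a Tychonoff space with $|X|>1$. The following are equivalent: (a) $X$ has an isolated point; (b) $\mathbb{R}$ is a direct summand of $C(X)$ (as a ring); (c) $\mathbb{AG}(X)$ has a leaf vertex; (d) $\mathbb{AG}(X)$ is not triangulated.
   Context: $C(X)$ is the ring of real-valued continuous functions on $X$. $\mathbb{A}(X)$ is the set of nonzero ideals $I$ of $C(X)$ for which there is a nonzero ideal $J$ with $IJ=\{0\}$; $\mathbb{AG}(X)$ has vertex set $\mathbb{A}(X)$, distinct $I,J$ adjacent iff $IJ=\{0\}$. A leaf vertex is a vertex adjacent to exactly one vertex. A graph is triangulated if every vertex lies on some triangle (3-cycle). *)

From Stdlib Require Import Reals.
Open Scope R_scope.

Record topology (X : Type) : Type := Topology {
  is_open : (X -> Prop) -> Prop;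
  open_empty : is_open (fun _ => False);
  open_full : is_open (fun _ => True);
  open_inter : forall U V, is_open U -> is_open V -> is_open (fun x => U x /\ V x);
  open_union : forall (F : (X -> Prop) -> Prop),
      (forall U, F U -> is_open U) -> is_open (fun x => exists U, F U /\ U x)
}.
Arguments is_open {X} t U.

Definition is_closed {X : Type} (T : topology X) (F : X -> Prop) : Prop :=
  is_open T (fun x => ~ F x).

Definition R_open (U : R -> Prop) : Prop :=
  forall r, U r -> exists eps, 0 < eps /\ forall s, Rabs (s - r) < eps -> U s.

Definition continuous_R {X : Type} (T : topology X) (f : X -> R) : Prop :=
  forall U, R_open U -> is_open T (fun x => U (f x)).

Definition T1_space {X : Type} (T : topology X) : Prop :=
  forall x y : X, x <> y -> exists U, is_open T U /\ U x /\ ~ U y.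

Definition completely_regular {X : Type} (T : topology X) : Prop :=
  forall (F : X -> Prop) (x : X), is_closed T F -> ~ F x ->
    exists f : X -> R, continuous_R T f /\ (forall y, 0 <= f y <= 1) /\
      f x = 0 /\ forall y, F y -> f y = 1.

Definition tychonoff {X : Type} (T : topology X) : Prop :=
  T1_space T /\ completely_regular T.

Definition isolated_point {X : Type} (T : topology X) (x : X) : Prop :=
  is_open T (fun y => y = x).

(* C(X): elements are continuous real functions; ring operations pointwise. *)
Definition CX {X : Type} (T : topology X) (f : X -> R) : Prop := continuous_R T f.

Definition zero_fun {X : Type} : X -> R := fun _ => 0.

Definition is_ideal {X : Type} (T : topology X) (I : (X -> R) -> Prop) : Prop :=
  (forall f, I f -> CX T f) /\
  I zero_fun /\
  (forall f g, I f -> I g -> I (fun x => f x + g x)) /\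
  (forall f, I f -> I (fun x => - f x)) /\
  (forall f g, CX T g -> I f -> I (fun x => g x * f x)).

Definition nonzero_ideal {X : Type} (I : (X -> R) -> Prop) : Prop :=
  exists f, I f /\ f <> zero_fun.

(* IJ = {0}: since IJ is generated by the products fg (f in I, g in J),
   this says all such products vanish. *)
Definition ideal_prod_zero {X : Type} (I J : (X -> R) -> Prop) : Prop :=
  forall f g, I f -> J g -> (fun x => f x * g x) = zero_fun.

Definition same_ideal {X : Type} (I J : (X -> R) -> Prop) : Prop :=
  forall f, I f <-> J f.

Definition AX {X : Type} (T : topology X) (I : (X -> R) -> Prop) : Prop :=
  is_ideal T I /\ nonzero_ideal I /\
  exists J, is_ideal T J /\ nonzero_ideal J /\ ideal_prod_zero I J.

Definition AG_adj {X : Type} (T : topology X) (I J : (X -> R) -> Prop) : Prop :=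
  AX T I /\ AX T J /\ ~ same_ideal I J /\ ideal_prod_zero I J.

Definition AG_has_leaf {X : Type} (T : topology X) : Prop :=
  exists I, AX T I /\ exists J, AG_adj T I J /\
    forall K, AG_adj T I K -> same_ideal K J.

Definition AG_triangulated {X : Type} (T : topology X) : Prop :=
  forall I, AX T I -> exists J K,
    AG_adj T I J /\ AG_adj T J K /\ AG_adj T K I.

Definition R_direct_summand {X : Type} (T : topology X) : Prop :=
  exists A B : (X -> R) -> Prop,
    is_ideal T A /\ is_ideal T B /\
    (forall f, A f -> B f -> f = zero_fun) /\
    (forall f, CX T f -> exists a b, A a /\ B b /\ f = (fun x => a x + b x)) /\
    exists phi : R -> (X -> R),
      (forall r, A (phi r)) /\
      (forall r s, phi r = phi s -> r = s) /\
      (forall a, A a -> exists r, phi r = a) /\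
      (forall r s, phi (r + s) = (fun x => phi r x + phi s x)) /\
      (forall r s, phi (r * s) = (fun x => phi r x * phi s x)).

From Stdlib Require Import Reals Lra.
From Stdlib Require Import Classical FunctionalExtensionality PropExtensionality ClassicalEpsilon.
Open Scope R_scope.

(* (a) => (b): for an isolated point x the indicator e_x of {x} is continuous and
   C(X) = R e_x (+) M_x, where M_x is the ideal of functions vanishing at x.
   (b) => (a): the image e of 1 under R -> C(X) is a nonzero continuous idempotent;
   separating points by functions vanishing at one of them shows that its cozero
   set is a single point, which is therefore open.
   (a) => (c): points are separated by functions of M_x, so the annihilator of M_x
   is the one-dimensional ideal R e_x; hence M_x is a leaf with neighbour R e_x.
   (c) => (d): a leaf lies on no triangle.
   (d) => (a): if no point is isolated and a vertex I is annihilated by g <> 0,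
   then g is nonzero at two points p <> q; cutting g with the positive and negative
   parts of a Urysohn function separating p and q gives g1, g2 with g1 g2 = 0 and
   neither in I, so I, (g1), (g2) form a triangle. *)

Lemma pred_ext {A : Type} (P Q : A -> Prop) : (forall x, P x <-> Q x) -> P = Q.
Proof.
  intros H; apply functional_extensionality; intro x.
  apply propositional_extensionality, H.
Qed.

Lemma R_open_ball (a d : R) : R_open (fun s => Rabs (s - a) < d).
Proof.
  intros r Hr; exists (d - Rabs (r - a)); split; [lra |].
  intros s Hs.
  pose proof (Rabs_triang (s - r) (r - a)) as H.
  replace (s - r + (r - a)) with (s - a) in H by ring; lra.
Qed.

Lemma R_open_neq0 : R_open (fun r => r <> 0).
Proof.
  intros r Hr; exists (Rabs r); split; [now apply Rabs_pos_lt |].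
  intros s Hs ->; rewrite Rminus_0_l, Rabs_Ropp in Hs; lra.
Qed.

Lemma Rmax0_lipschitz (s t : R) : Rabs (Rmax 0 s - Rmax 0 t) <= Rabs (s - t).
Proof.
  unfold Rmax; destruct (Rle_dec 0 s), (Rle_dec 0 t);
    unfold Rabs; repeat destruct Rcase_abs; lra.
Qed.

Lemma Rmax0_opp_mult (s : R) : Rmax 0 (- s) * Rmax 0 s = 0.
Proof. unfold Rmax; destruct (Rle_dec 0 (- s)), (Rle_dec 0 s); nra. Qed.

Section ContinuousFunctions.
Variables (X : Type) (T : topology X).

Lemma open_of_local (S : X -> Prop) :
  (forall x, S x -> exists V, is_open T V /\ V x /\ forall y, V y -> S y) ->
  is_open T S.
Proof.
  intros H.
  replace S with (fun x => exists U,
    (fun V => is_open T V /\ forall y, V y -> S y) U /\ U x).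
  - apply open_union; intros U [HU _]; exact HU.
  - apply pred_ext; intro x; split.
    + intros [U [[_ HU] HUx]]; auto.
    + intro Hx; destruct (H x Hx) as [V [HV [HVx HVS]]]; exists V; auto.
Qed.

Lemma continuous_R_const (c : R) : continuous_R T (fun _ => c).
Proof.
  intros U _; apply open_of_local; intros x Hx.
  exists (fun _ => True); split; [apply open_full | auto].
Qed.

Lemma continuous_R_binop (op : R -> R -> R) (f g : X -> R) :
  (forall a b eps, 0 < eps -> exists d, 0 < d /\ forall s t,
     Rabs (s - a) < d -> Rabs (t - b) < d -> Rabs (op s t - op a b) < eps) ->
  continuous_R T f -> continuous_R T g -> continuous_R T (fun x => op (f x) (g x)).
Proof.
  intros Hop Hf Hg U HU; apply open_of_local; intros x0 Hx0.
  destruct (HU _ Hx0) as [eps [Heps HB]].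
  destruct (Hop (f x0) (g x0) eps Heps) as [d [Hd Hst]].
  exists (fun x => Rabs (f x - f x0) < d /\ Rabs (g x - g x0) < d); split; [| split].
  - apply open_inter; [apply (Hf (fun s => Rabs (s - f x0) < d)) | apply (Hg (fun s => Rabs (s - g x0) < d))];
      apply R_open_ball.
  - unfold Rminus; rewrite !Rplus_opp_r, Rabs_R0; lra.
  - intros y [H1 H2]; apply HB, Hst; assumption.
Qed.

Lemma continuous_R_plus (f g : X -> R) :
  continuous_R T f -> continuous_R T g -> continuous_R T (fun x => f x + g x).
Proof.
  apply continuous_R_binop; intros a b eps He.
  exists (eps / 2); split; [lra |]; intros s t Hs Ht.
  replace (s + t - (a + b)) with ((s - a) + (t - b)) by ring.
  eapply Rle_lt_trans; [apply Rabs_triang | lra].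
Qed.

Lemma continuous_R_mult (f g : X -> R) :
  continuous_R T f -> continuous_R T g -> continuous_R T (fun x => f x * g x).
Proof.
  apply continuous_R_binop; intros a b eps He.
  set (D := Rabs a + Rabs b + 1).
  assert (HD : 0 < D) by (unfold D; pose proof (Rabs_pos a); pose proof (Rabs_pos b); lra).
  exists (Rmin 1 (eps / D)); split.
  { apply Rmin_pos; [lra | apply Rdiv_lt_0_compat; lra]. }
  set (d := Rmin 1 (eps / D)); intros s t Hs Ht.
  assert (Hd1 : d <= 1) by apply Rmin_l.
  assert (HdD : d * D <= eps).
  { assert (d <= eps / D) by apply Rmin_r.
    replace eps with (eps / D * D) by (field; lra).
    apply Rmult_le_compat_r; lra. }
  replace (s * t - a * b) with ((s - a) * (t - b) + a * (t - b) + b * (s - a)) by ring.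
  pose proof (Rabs_triang ((s - a) * (t - b) + a * (t - b)) (b * (s - a))).
  pose proof (Rabs_triang ((s - a) * (t - b)) (a * (t - b))).
  rewrite !Rabs_mult in *.
  pose proof (Rabs_pos (s - a)); pose proof (Rabs_pos (t - b));
    pose proof (Rabs_pos a); pose proof (Rabs_pos b).
  unfold D in HdD; nra.
Qed.

Lemma continuous_R_lipschitz (phi : R -> R) (f : X -> R) :
  (forall s t, Rabs (phi s - phi t) <= Rabs (s - t)) ->
  continuous_R T f -> continuous_R T (fun x => phi (f x)).
Proof.
  intros Hphi Hf U HU; apply (Hf (fun s => U (phi s))); intros r Hr.
  destruct (HU _ Hr) as [e [He HB]]; exists e; split; [exact He |].
  intros s Hs; apply HB; eapply Rle_lt_trans; [apply Hphi | exact Hs].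
Qed.

Lemma continuous_R_opp (f : X -> R) :
  continuous_R T f -> continuous_R T (fun x => - f x).
Proof.
  apply continuous_R_lipschitz; intros s t.
  replace (- s - - t) with (- (s - t)) by ring; rewrite Rabs_Ropp; lra.
Qed.

Lemma continuous_R_minus (f g : X -> R) :
  continuous_R T f -> continuous_R T g -> continuous_R T (fun x => f x - g x).
Proof. intros Hf Hg; exact (continuous_R_plus _ _ Hf (continuous_R_opp _ Hg)). Qed.

Lemma continuous_R_pos_part (f : X -> R) :
  continuous_R T f -> continuous_R T (fun x => Rmax 0 (f x)).
Proof. apply continuous_R_lipschitz, Rmax0_lipschitz. Qed.

Lemma T1_open_neq (x : X) : T1_space T -> is_open T (fun y => y <> x).
Proof.
  intros HT1; apply open_of_local; intros y Hy.
  destruct (HT1 y x Hy) as [U [HU [HUy HUx]]].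
  exists U; repeat split; auto; intros z Hz ->; auto.
Qed.

Lemma tychonoff_separating (p q : X) : tychonoff T -> p <> q ->
  exists u, CX T u /\ u p = 0 /\ u q = 1.
Proof.
  intros [HT1 Hcr] Hpq.
  destruct (Hcr (fun y => y = q) p) as [u [Hu [_ [Hup Huq]]]]; auto.
  - apply T1_open_neq, HT1.
  - exists u; auto.
Qed.

Lemma isolated_of_cozero_singleton (g : X -> R) (x : X) :
  CX T g -> g x <> 0 -> (forall y, g y <> 0 -> y = x) -> isolated_point T x.
Proof.
  intros Hg Hgx Hsing; unfold isolated_point.
  replace (fun y => y = x) with (fun y => g y <> 0).
  - apply (Hg (fun r => r <> 0)), R_open_neq0.
  - apply pred_ext; intro y; split; [apply Hsing | now intros ->].
Qed.

Lemma nonzero_fun_value (f : X -> R) : f <> zero_fun -> exists y, f y <> 0.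
Proof.
  intro Hf; apply NNPP; intro N; apply Hf, functional_extensionality; intro y.
  apply NNPP; intro Hy; apply N; exists y; exact Hy.
Qed.

Lemma value_nonzero_fun (f : X -> R) (y : X) : f y <> 0 -> f <> zero_fun.
Proof. intros Hy ->; apply Hy; reflexivity. Qed.

End ContinuousFunctions.

Lemma ideal_prod_zero_sym {X : Type} (I J : (X -> R) -> Prop) :
  ideal_prod_zero I J -> ideal_prod_zero J I.
Proof.
  intros H f g Hf Hg; rewrite <- (H g f Hg Hf).
  apply functional_extensionality; intro; ring.
Qed.

Lemma ideal_prod_zero_sub {X : Type} (I J J' : (X -> R) -> Prop) :
  ideal_prod_zero I J -> (forall f, J' f -> J f) -> ideal_prod_zero I J'.
Proof. intros H Hsub f g Hf Hg; exact (H f g Hf (Hsub g Hg)). Qed.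

Lemma not_same_ideal_of_mem {X : Type} (I J : (X -> R) -> Prop) (f : X -> R) :
  J f -> ~ I f -> ~ same_ideal I J.
Proof. intros HJ HI E; apply HI, E, HJ. Qed.

Lemma AG_adj_sym {X : Type} (T : topology X) (I J : (X -> R) -> Prop) :
  AG_adj T I J -> AG_adj T J I.
Proof.
  intros [HI [HJ [Hne Hprod]]]; split; [exact HJ | split; [exact HI | split]].
  - intro E; apply Hne; intro f; split; apply E.
  - apply ideal_prod_zero_sym, Hprod.
Qed.

Lemma leaf_not_triangulated {X : Type} (T : topology X) :
  AG_has_leaf T -> ~ AG_triangulated T.
Proof.
  intros [I [AI [J [_ Hleaf]]]] Htri.
  destruct (Htri I AI) as [J' [K' [HIJ' [[_ [_ [Hne _]]] HK'I]]]].
  pose proof (Hleaf J' HIJ') as E1; pose proof (Hleaf K' (AG_adj_sym T _ _ HK'I)) as E2.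
  apply Hne; intro f; specialize (E1 f); specialize (E2 f); tauto.
Qed.

Section Ideals.
Variables (X : Type) (T : topology X).

Definition principal_ideal (h : X -> R) : (X -> R) -> Prop :=
  fun f => exists c, CX T c /\ f = (fun y => c y * h y).

Lemma principal_ideal_is_ideal (h : X -> R) : CX T h -> is_ideal T (principal_ideal h).
Proof.
  intros Hh; repeat split.
  - intros f [c [Hc ->]]; apply continuous_R_mult; auto.
  - exists (fun _ => 0); split; [apply continuous_R_const |].
    apply functional_extensionality; intro; unfold zero_fun; ring.
  - intros f g [c [Hc ->]] [d [Hd ->]]; exists (fun y => c y + d y).
    split; [apply continuous_R_plus; auto | apply functional_extensionality; intro; ring].
  - intros f [c [Hc ->]]; exists (fun y => - c y).
    split; [apply continuous_R_opp; auto | apply functional_extensionality; intro; ring].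
  - intros f g Hg [c [Hc ->]]; exists (fun y => g y * c y).
    split; [apply continuous_R_mult; auto | apply functional_extensionality; intro; ring].
Qed.

Lemma principal_ideal_gen (h : X -> R) : principal_ideal h h.
Proof.
  exists (fun _ => 1); split; [apply continuous_R_const |].
  apply functional_extensionality; intro; ring.
Qed.

Lemma principal_ideal_sub (J : (X -> R) -> Prop) (h : X -> R) :
  is_ideal T J -> J h -> forall f, principal_ideal h f -> J f.
Proof. intros [_ [_ [_ [_ HJmul]]]] Hh f [c [Hc ->]]; apply HJmul; auto. Qed.

Lemma principal_ideal_vanish (h f : X -> R) (x : X) :
  principal_ideal h f -> h x = 0 -> f x = 0.
Proof. intros [c [_ ->]] Hx; rewrite Hx; ring. Qed.

Lemma principal_ideal_prod_zero (h1 h2 : X -> R) :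
  (forall y, h1 y * h2 y = 0) ->
  ideal_prod_zero (principal_ideal h1) (principal_ideal h2).
Proof.
  intros H f g [c [_ ->]] [d [_ ->]]; apply functional_extensionality; intro y.
  unfold zero_fun; transitivity (c y * d y * (h1 y * h2 y)); [ring | rewrite H; ring].
Qed.

Lemma principal_ideal_AX (h1 h2 : X -> R) :
  CX T h1 -> CX T h2 -> h1 <> zero_fun -> h2 <> zero_fun ->
  (forall y, h1 y * h2 y = 0) -> AX T (principal_ideal h1).
Proof.
  intros Hh1 Hh2 Hnz1 Hnz2 Hprod.
  split; [apply principal_ideal_is_ideal, Hh1 |].
  split; [exists h1; split; [apply principal_ideal_gen | exact Hnz1] |].
  exists (principal_ideal h2); split; [apply principal_ideal_is_ideal, Hh2 |].
  split; [exists h2; split; [apply principal_ideal_gen | exact Hnz2] |].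
  apply principal_ideal_prod_zero, Hprod.
Qed.

Lemma principal_ideal_neq (h1 h2 : X -> R) (y : X) :
  h1 y = 0 -> h2 y <> 0 -> ~ same_ideal (principal_ideal h1) (principal_ideal h2).
Proof.
  intros H1 H2 E; apply H2.
  exact (principal_ideal_vanish h1 h2 y (proj2 (E h2) (principal_ideal_gen h2)) H1).
Qed.

Lemma AG_adj_principal_annihilator (I J : (X -> R) -> Prop) (g h : X -> R) (y : X) :
  AX T I -> is_ideal T J -> J g -> ideal_prod_zero I J ->
  J h -> h y * g y <> 0 -> AX T (principal_ideal h) ->
  AG_adj T I (principal_ideal h).
Proof.
  intros AI HJ Hg HIJ Hh Hhy Ah; split; [exact AI | split; [exact Ah | split]].
  - apply (not_same_ideal_of_mem _ _ h); [apply principal_ideal_gen |].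
    intro Ih; apply Hhy; exact (equal_f (HIJ h g Ih Hg) y).
  - apply (ideal_prod_zero_sub I J); [exact HIJ | apply principal_ideal_sub; assumption].
Qed.

End Ideals.

Section IsolatedPoints.
Variables (X : Type) (T : topology X).
Hypothesis HT : tychonoff T.

Definition indicator (x y : X) : R :=
  if excluded_middle_informative (y = x) then 1 else 0.

Lemma indicator_same (x : X) : indicator x x = 1.
Proof. unfold indicator; destruct excluded_middle_informative; congruence. Qed.

Lemma indicator_other (x y : X) : y <> x -> indicator x y = 0.
Proof. unfold indicator; destruct excluded_middle_informative; congruence. Qed.

Lemma indicator_01 (x y : X) : indicator x y = 0 \/ indicator x y = 1.
Proof. unfold indicator; destruct excluded_middle_informative; auto. Qed.

Lemma indicator_mult_l (c : X -> R) (x y : X) :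
  c y * indicator x y = c x * indicator x y.
Proof.
  destruct (classic (y = x)) as [-> | Hyx]; [reflexivity |].
  rewrite indicator_other by exact Hyx; ring.
Qed.

Lemma continuous_indicator (x : X) : isolated_point T x -> CX T (indicator x).
Proof.
  intros Hiso U _; apply open_of_local; intros y Hy.
  destruct (classic (y = x)) as [-> | Hyx].
  - exists (fun z => z = x); split; [exact Hiso | split; [reflexivity |]].
    intros z ->; exact Hy.
  - exists (fun z => z <> x); split; [apply T1_open_neq, HT | split; [exact Hyx |]].
    intros z Hzx; rewrite indicator_other in * by assumption; exact Hy.
Qed.

Definition span_indicator (x : X) : (X -> R) -> Prop :=
  fun a => exists r, a = (fun y => r * indicator x y).

Definition vanishing_ideal (x : X) : (X -> R) -> Prop :=
  fun f => CX T f /\ f x = 0.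

Lemma span_indicator_is_ideal (x : X) :
  isolated_point T x -> is_ideal T (span_indicator x).
Proof.
  intros Hiso; repeat split.
  - intros f [r ->]; apply continuous_R_mult;
      [apply continuous_R_const | apply continuous_indicator, Hiso].
  - exists 0; apply functional_extensionality; intro; unfold zero_fun; ring.
  - intros f g [r ->] [s ->]; exists (r + s); apply functional_extensionality; intro; ring.
  - intros f [r ->]; exists (- r); apply functional_extensionality; intro; ring.
  - intros f g _ [r ->]; exists (g x * r); apply functional_extensionality; intro y.
    transitivity (r * (g y * indicator x y)); [ring | rewrite indicator_mult_l; ring].
Qed.

Lemma vanishing_ideal_is_ideal (x : X) : is_ideal T (vanishing_ideal x).
Proof.
  split; [| split; [| split; [| split]]].
  - intros f [Hf _]; exact Hf.
  - split; [apply continuous_R_const | reflexivity].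
  - intros f g [Hf Hfx] [Hg Hgx]; split; [apply continuous_R_plus; auto | rewrite Hfx, Hgx; ring].
  - intros f [Hf Hfx]; split; [apply continuous_R_opp; auto | rewrite Hfx; ring].
  - intros f g Hg [Hf Hfx]; split; [apply continuous_R_mult; auto | rewrite Hfx; ring].
Qed.

Lemma vanishing_ideal_prod_span (x : X) :
  ideal_prod_zero (vanishing_ideal x) (span_indicator x).
Proof.
  intros f g [_ Hfx] [r ->]; apply functional_extensionality; intro y; unfold zero_fun.
  transitivity (r * (f y * indicator x y)); [ring | rewrite indicator_mult_l, Hfx; ring].
Qed.

(* Functions vanishing at x separate x from every other point. *)
Lemma annihilator_vanishing_ideal (x : X) (K : (X -> R) -> Prop) :
  ideal_prod_zero (vanishing_ideal x) K -> forall k, K k -> span_indicator x k.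
Proof.
  intros HK k Hk; exists (k x); apply functional_extensionality; intro y.
  destruct (classic (y = x)) as [-> | Hyx]; [rewrite indicator_same; ring |].
  destruct (tychonoff_separating X T x y HT (not_eq_sym Hyx)) as [v [Hv [Hvx Hvy]]].
  pose proof (equal_f (HK v k (conj Hv Hvx) Hk) y) as Hvk; unfold zero_fun in Hvk.
  rewrite Hvy in Hvk; rewrite indicator_other by exact Hyx; lra.
Qed.

Lemma span_indicator_minimal (x : X) (K : (X -> R) -> Prop) :
  is_ideal T K -> nonzero_ideal K -> (forall k, K k -> span_indicator x k) ->
  same_ideal K (span_indicator x).
Proof.
  intros [_ [_ [_ [_ HKmul]]]] [k0 [Hk0 Hk0nz]] Hsub f; split; [apply Hsub |].
  intros [r ->]; destruct (Hsub k0 Hk0) as [c ->].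
  assert (Hc : c <> 0).
  { intros ->; apply Hk0nz, functional_extensionality; intro; unfold zero_fun; ring. }
  replace (fun y => r * indicator x y)
    with (fun y => (fun _ => r / c) y * (c * indicator x y)).
  - apply HKmul; [apply continuous_R_const | exact Hk0].
  - apply functional_extensionality; intro; field; exact Hc.
Qed.

Lemma direct_summand_of_isolated (x : X) : isolated_point T x -> R_direct_summand T.
Proof.
  intros Hiso; exists (span_indicator x), (vanishing_ideal x).
  split; [apply span_indicator_is_ideal, Hiso |].
  split; [apply vanishing_ideal_is_ideal |].
  split.
  { intros f [r ->] [_ Hx]; rewrite indicator_same, Rmult_1_r in Hx; subst r.
    apply functional_extensionality; intro; unfold zero_fun; ring. }
  split.
  { intros f Hf; exists (fun y => f x * indicator x y), (fun y => f y - f x * indicator x y).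
    split; [exists (f x); reflexivity |]; split.
    - split; [| rewrite indicator_same; ring].
      apply continuous_R_minus, continuous_R_mult; auto;
        [apply continuous_R_const | apply continuous_indicator, Hiso].
    - apply functional_extensionality; intro; ring. }
  exists (fun r y => r * indicator x y).
  split; [intro r; exists r; reflexivity |].
  split; [intros r s Hrs; pose proof (equal_f Hrs x) as E;
          cbv beta in E; rewrite indicator_same in E; lra |].
  split; [intros a [r ->]; exists r; reflexivity |].
  split; intros r s; apply functional_extensionality; intro y;
    destruct (indicator_01 x y) as [-> | ->]; ring.
Qed.

Lemma leaf_of_isolated (x y : X) : y <> x -> isolated_point T x -> AG_has_leaf T.
Proof.
  intros Hyx Hiso.
  destruct (tychonoff_separating X T x y HT (not_eq_sym Hyx)) as [u [Hu [Hux Huy]]].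
  assert (Hmu : vanishing_ideal x u) by (split; assumption).
  assert (Hunz : u <> zero_fun) by (apply (value_nonzero_fun X u y); lra).
  assert (Hei : span_indicator x (indicator x))
    by (exists 1; apply functional_extensionality; intro; ring).
  assert (Heinz : indicator x <> zero_fun)
    by (apply (value_nonzero_fun X _ x); rewrite indicator_same; lra).
  assert (Hprod := vanishing_ideal_prod_span x).
  assert (HM := vanishing_ideal_is_ideal x).
  assert (HE := span_indicator_is_ideal x Hiso).
  assert (AM : AX T (vanishing_ideal x)).
  { split; [exact HM | split; [exists u; auto |]].
    exists (span_indicator x); split; [exact HE | split; [exists (indicator x); auto | exact Hprod]]. }
  assert (AE : AX T (span_indicator x)).
  { split; [exact HE | split; [exists (indicator x); auto |]].
    exists (vanishing_ideal x); split; [exact HM | split; [exists u; auto |]].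
    apply ideal_prod_zero_sym, Hprod. }
  exists (vanishing_ideal x); split; [exact AM |].
  exists (span_indicator x); split.
  - split; [exact AM | split; [exact AE | split; [| exact Hprod]]].
    intro E; destruct (proj1 (E u) Hmu) as [r Hr].
    pose proof (equal_f Hr y) as Ey; cbv beta in Ey; rewrite indicator_other in Ey by exact Hyx; lra.
  - intros K [_ [[HK [HKnz _]] [_ HMK]]].
    apply span_indicator_minimal; auto.
    apply annihilator_vanishing_ideal, HMK.
Qed.

(* The inverse of r in R makes [phi r] a unit of the ring [A], so [phi r] can
   vanish nowhere on the cozero set of [phi 1]. *)
Lemma isolated_of_direct_summand : R_direct_summand T -> exists x, isolated_point T x.
Proof.
  intros [A [_ [HA [_ [_ [_ [phi [PA [Pinj [Psurj [Padd Pmul]]]]]]]]]]].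
  set (e := phi 1).
  assert (Pzero : forall y, phi 0 y = 0).
  { intro y; pose proof (equal_f (Padd 0 0) y) as H; rewrite Rplus_0_r in H; lra. }
  assert (Eidem : forall y, e y * e y = e y).
  { intro y; pose proof (equal_f (Pmul 1 1) y) as H; rewrite Rmult_1_r in H; unfold e; lra. }
  assert (Eone : forall y, e y <> 0 -> e y = 1).
  { intros y Hy; apply (Rmult_eq_reg_r (e y)); [rewrite Eidem; ring | exact Hy]. }
  destruct HA as [HAc [_ [_ [_ HAmul]]]].
  assert (He : CX T e) by apply HAc, PA.
  destruct (nonzero_fun_value X e) as [x Hx].
  { intro E; apply R1_neq_R0, Pinj, functional_extensionality; intro y.
    rewrite Pzero; exact (equal_f E y). }
  exists x; apply (isolated_of_cozero_singleton X T e x He Hx).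
  intros y Hy; apply NNPP; intro Hyx.
  destruct (tychonoff_separating X T y x HT Hyx) as [u [Hu [Huy Hux]]].
  destruct (Psurj _ (HAmul e u Hu (PA 1))) as [r Hr].
  assert (Hr0 : r <> 0).
  { intros ->; pose proof (equal_f Hr x) as E; rewrite Pzero, Hux in E.
    fold e in E; rewrite (Eone x Hx) in E; lra. }
  pose proof (equal_f (Pmul r (/ r)) y) as E.
  rewrite Rinv_r in E by exact Hr0; fold e in E; rewrite Hr, Huy in E.
  apply Hy; rewrite E; ring.
Qed.

End IsolatedPoints.

Section Triangles.
Variables (X : Type) (T : topology X).
Hypothesis HT : tychonoff T.

Lemma triangle_of_split (I J : (X -> R) -> Prop) (g k1 k2 : X -> R) (p q : X) :
  AX T I -> is_ideal T J -> J g -> ideal_prod_zero I J ->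
  CX T k1 -> CX T k2 -> (forall y, k1 y * k2 y = 0) ->
  k1 p * g p <> 0 -> k2 q * g q <> 0 ->
  exists J1 J2, AG_adj T I J1 /\ AG_adj T J1 J2 /\ AG_adj T J2 I.
Proof.
  intros AI HJ Hg HIJ Hk1 Hk2 Hk12 Hp Hq.
  set (h1 := fun y => k1 y * g y); set (h2 := fun y => k2 y * g y).
  pose proof HJ as [HJc [_ [_ [_ HJmul]]]].
  assert (Jh1 : J h1) by (apply HJmul; assumption).
  assert (Jh2 : J h2) by (apply HJmul; assumption).
  assert (Hh12 : forall y, h1 y * h2 y = 0).
  { intro y; unfold h1, h2.
    transitivity (k1 y * k2 y * (g y * g y)); [ring | rewrite Hk12; ring]. }
  assert (A1 : AX T (principal_ideal X T h1)).
  { apply (principal_ideal_AX X T h1 h2 (HJc _ Jh1) (HJc _ Jh2)); [| | exact Hh12];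
      eapply value_nonzero_fun; eassumption. }
  assert (A2 : AX T (principal_ideal X T h2)).
  { apply (principal_ideal_AX X T h2 h1 (HJc _ Jh2) (HJc _ Jh1)).
    - eapply value_nonzero_fun; eassumption.
    - eapply value_nonzero_fun; eassumption.
    - intro y; rewrite Rmult_comm; apply Hh12. }
  assert (Hh1p : h1 p * g p <> 0).
  { unfold h1; intro E; apply Hp.
    destruct (Rmult_integral _ _ E) as [E' | E']; [exact E' | rewrite E'; ring]. }
  assert (Hh2q : h2 q * g q <> 0).
  { unfold h2; intro E; apply Hq.
    destruct (Rmult_integral _ _ E) as [E' | E']; [exact E' | rewrite E'; ring]. }
  exists (principal_ideal X T h1), (principal_ideal X T h2).
  split; [exact (AG_adj_principal_annihilator X T I J g h1 p AI HJ Hg HIJ Jh1 Hh1p A1) |].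
  split; [| apply AG_adj_sym;
            exact (AG_adj_principal_annihilator X T I J g h2 q AI HJ Hg HIJ Jh2 Hh2q A2)].
  split; [exact A1 | split; [exact A2 | split]].
  - apply (principal_ideal_neq X T h1 h2 q).
    + unfold h1; destruct (Rmult_integral _ _ (Hk12 q)) as [E | E]; [rewrite E; ring |].
      exfalso; apply Hq; rewrite E; ring.
    + intro E; apply Hh2q; rewrite E; ring.
  - apply principal_ideal_prod_zero, Hh12.
Qed.

Lemma triangulated_of_no_isolated :
  ~ (exists x, isolated_point T x) -> AG_triangulated T.
Proof.
  intros Hnoiso I AI.
  pose proof AI as [_ [_ [J [HJ [[g [Hg Hgnz]] HIJ]]]]].
  assert (Hgc : CX T g) by (apply HJ, Hg).
  destruct (nonzero_fun_value X g Hgnz) as [p Hp].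
  assert (Hq : exists q, q <> p /\ g q <> 0).
  { apply NNPP; intro N; apply Hnoiso; exists p.
    apply (isolated_of_cozero_singleton X T g p Hgc Hp).
    intros y Hy; apply NNPP; intro Hyp; apply N; exists y; auto. }
  destruct Hq as [q [Hqp Hq]].
  destruct (tychonoff_separating X T p q HT (not_eq_sym Hqp)) as [u [Hu [Hup Huq]]].
  set (v := fun y => u y - / 2).
  assert (Hv : CX T v) by (apply continuous_R_minus; [exact Hu | apply continuous_R_const]).
  apply (triangle_of_split I J g (fun y => Rmax 0 (- v y)) (fun y => Rmax 0 (v y)) p q);
    auto.
  - apply continuous_R_pos_part, continuous_R_opp, Hv.
  - apply continuous_R_pos_part, Hv.
  - intro y; apply Rmax0_opp_mult.
  - unfold v; rewrite Hup, Rmax_right by lra; intro E.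
    destruct (Rmult_integral _ _ E); lra.
  - unfold v; rewrite Huq, Rmax_right by lra; intro E.
    destruct (Rmult_integral _ _ E); lra.
Qed.

End Triangles.

Theorem mainTheorem15 (X : Type) (T : topology X) (HT : tychonoff T)
  (Hcard : exists x y : X, x <> y) :
  ((exists x, isolated_point T x) <-> R_direct_summand T) /\
  (R_direct_summand T <-> AG_has_leaf T) /\
  (AG_has_leaf T <-> ~ AG_triangulated T).
Proof.
  assert (a_b : (exists x, isolated_point T x) -> R_direct_summand T)
    by (intros [x Hx]; exact (direct_summand_of_isolated X T HT x Hx)).
  assert (b_a := isolated_of_direct_summand X T HT).
  assert (a_c : (exists x, isolated_point T x) -> AG_has_leaf T).
  { intros [x Hx]; destruct Hcard as [y [z Hyz]].
    destruct (classic (y = x)) as [-> | Hyx].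
    - exact (leaf_of_isolated X T HT x z (not_eq_sym Hyz) Hx).
    - exact (leaf_of_isolated X T HT x y Hyx Hx). }
  assert (c_nd := leaf_not_triangulated T).
  assert (nd_a : ~ AG_triangulated T -> exists x, isolated_point T x).
  { intro Hnd; apply NNPP; intro Hnoiso; exact (Hnd (triangulated_of_no_isolated X T HT Hnoiso)). }
  tauto.
Qed.
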